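(* Let $k \geq 2$ be an integer. If $c$ is a rational number such that $\mathcal{G}[\{K_{1,k}\}, c]$ is finite and $\mathcal{G}(\{K_{1,k}\}, c)^*$ is infinite (that is, $c = c(K_{1,k})$ exists), then \[c \geq \frac{2}{2k+3}.\]
   Context: Graphs are finite and simple. For $D \subseteq V(G)$, $N[D]$ is the union of closed neighbourhoods of vertices of $D$. For a set $\mathcal{F}$ of graphs, $D$ is $\mathcal{F}$-isolating if $G - N[D]$ contains no subgraph isomorphic to a member of $\mathcal{F}$, and $\iota(G,\mathcal{F})$ is the minimum size of such a set. Let $\mathcal{G}$ be the set of connected graphs $G$ with $V(G) = [n]$ for some $n \geq 1$. For real $\alpha > 0$, $\mathcal{G}(\mathcal{F},\alpha) = \{G \in \mathcal{G} : \iota(G,\mathcal{F}) \le \lfloor \alpha|V(G)| \rfloor\}$, $\mathcal{G}(\mathcal{F},\alpha)^* = \{G \in \mathcal{G}(\mathcal{F},\alpha) : \iota(G,\mathcal{F}) = \lfloor \alpha |V(G)|\rfloor\}$, and $\mathcal{G}[\mathcal{F},\alpha] = \mathcal{G} \setminus \mathcal{G}(\mathcal{F},\alpha)$. The number $c(\mathcal{F})$, when it exists, is a rational number such that $\mathcal{G}[\mathcal{F},c(\mathcal{F})]$ is finite and $\mathcal{G}(\mathcal{F},c(\mathcal{F}))^*$ is infinite. $K_{1,k}$ is the star with $k$ leaves. *)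

From Stdlib Require List.
From mathcomp Require Import all_boot all_order all_algebra.
Unset Printing Implicit Defensive.
Import Order.TTheory GRing.Theory Num.Theory.

(* A (labelled) graph with vertex set 'I_n (standing for [n] = {1..n}),
   given by its adjacency matrix. *)
Definition graph := {n : nat & {ffun 'I_n * 'I_n -> bool}}.
Definition order (G : graph) : nat := projT1 G.
Definition adj (G : graph) (x y : 'I_(order G)) : bool := projT2 G (x, y).

Definition simple_graph (G : graph) : Prop :=
  forall x y : 'I_(order G), adj G x y = adj G y x /\ ~~ adj G x x.

Definition connected_graph (G : graph) : Prop :=
  forall x y : 'I_(order G), connect (fun u v => adj G u v) x y.

Definition calG (G : graph) : Prop :=
  (1 <= order G)%N /\ simple_graph G /\ connected_graph G.

Definition closed_nbhd (G : graph) (D : {set 'I_(order G)}) : {set 'I_(order G)} :=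
  [set y | [exists x in D, (x == y) || adj G x y]].

Definition contains_copy_in (G : graph) (S : {set 'I_(order G)}) (H : graph) : bool :=
  [exists f : {ffun 'I_(order H) -> 'I_(order G)},
     [&& injectiveb f, [forall i, f i \in S] &
         [forall i, forall j, adj H i j ==> adj G (f i) (f j)]]].

Definition isolating (G : graph) (F : seq graph) (D : {set 'I_(order G)}) : bool :=
  all (fun H => ~~ contains_copy_in G (~: closed_nbhd G D) H) F.

Definition iota (G : graph) (F : seq graph) : nat :=
  \big[minn/order G]_(D : {set 'I_(order G)} | isolating G F D) #|D|.

Definition floorQ (a : rat) (G : graph) : int := Num.floor (a * (order G)%:R).

(* \mathcal{G}(F,a), \mathcal{G}(F,a)^*, \mathcal{G}[F,a] *)
Definition calG_le (F : seq graph) (a : rat) (G : graph) : Prop :=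
  calG G /\ (Posz (iota G F) <= floorQ a G)%R.
Definition calG_star (F : seq graph) (a : rat) (G : graph) : Prop :=
  calG G /\ Posz (iota G F) = floorQ a G.
Definition calG_gt (F : seq graph) (a : rat) (G : graph) : Prop :=
  calG G /\ ~ calG_le F a G.

Definition finite_family (P : graph -> Prop) : Prop :=
  exists s : seq graph, forall G, P G -> List.In G s.

(* the star K_{1,k}: vertex 0 is the centre, vertices 1..k the leaves *)
Definition star (k : nat) : graph :=
  existT (fun n => {ffun 'I_n * 'I_n -> bool}) k.+1
    [ffun p : 'I_k.+1 * 'I_k.+1 =>
       (nat_of_ord p.1 == 0%N) != (nat_of_ord p.2 == 0%N)].

From Pilot Require Import Defs.
From mathcomp Require Import all_boot all_order all_algebra zify.
Import Order.TTheory GRing.Theory Num.Theory.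

(* Take m copies of the crown on 2k + 2 vertices (K_{k+1,k+1} minus a perfect
   matching, which is k-regular), attach a pendant hub to one crown vertex of
   each copy, and join the m hubs into a clique.  A single vertex d never
   suffices to isolate K_{1,k} inside its copy: the vertex matched with d and
   its k neighbours form a star avoiding N[d] (and the hub), and when d is the
   hub, a star on the crown side away from the hub's neighbour does.  So every
   isolating set meets each copy twice, and the graph of order m(2k + 3) has
   iota >= 2m.  If c < 2/(2k + 3), all these connected graphs lie in
   G[K_{1,k}, c], which is therefore infinite. *)

Lemma homo_connect (T U : finType) (e : rel T) (e' : rel U) (f : T -> U) :
  {homo f : x y / e x y >-> e' x y} ->
  forall x y, connect e x y -> connect e' (f x) (f y).
Proof.
move=> f_homo x _ /connectP[p e_p ->]; apply/connectP.
by exists (map f p); [exact: homo_path f_homo e_p | rewrite last_map].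
Qed.

Lemma contains_star_copy (G : graph) (S : {set 'I_(Defs.order G)}) k
    (c : 'I_(Defs.order G)) (l : 'I_k -> 'I_(Defs.order G)) :
  injective l -> (forall t, l t != c) ->
  (forall t, adj G c (l t)) -> (forall t, adj G (l t) c) ->
  c \in S -> (forall t, l t \in S) -> contains_copy_in G S (star k).
Proof.
move=> l_inj l_c adj_cl adj_lc cS lS; apply/existsP.
exists [ffun t => if unlift ord0 t is Some j then l j else c].
apply/and3P; split.
- apply/injectiveP => t t'; rewrite !ffunE.
  case: unliftP => [j ->|->]; case: unliftP => [j' ->|->] //.
  + by move/l_inj ->.
  + by move/eqP; rewrite (negbTE (l_c j)).
  + by move/esym/eqP; rewrite (negbTE (l_c j')).
- by apply/forallP => t; rewrite ffunE; case: unlift.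
apply/forallP => t; apply/forallP => t'; rewrite [adj (star k) _ _]/adj !ffunE /=.
by case: unliftP => [j ->|->]; case: unliftP => [j' ->|->];
  rewrite ?lift0 /= ?adj_cl ?adj_lc.
Qed.

Lemma leq_iota (G : graph) (F : seq graph) N :
  N <= Defs.order G -> (forall D, isolating G F D -> N <= #|D|) ->
  N <= Defs.iota G F.
Proof.
move=> N_le isoN; apply: (big_ind (leq N)) => // x y Nx Ny.
by rewrite leq_min Nx Ny.
Qed.

Lemma calG_gt_of_lt (F : seq graph) (c : rat) (G : graph) :
  calG G -> (c * (Defs.order G)%:R < (Defs.iota G F)%:R)%R -> calG_gt F c G.
Proof.
move=> GcalG lt_iota; split=> // -[_]; apply/negP; rewrite -ltNge /floorQ.
by rewrite -(ltr_int rat) (le_lt_trans (floor_le _)).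
Qed.

Lemma finite_family_order_bounded (P : graph -> Prop) :
  finite_family P -> exists N, forall G, P G -> Defs.order G <= N.
Proof.
case=> s Ps; exists (sumn (map Defs.order s)) => G /Ps.
elim: s {Ps} => //= H s IHs [-> | /IHs]; first exact: leq_addr.
by move/leq_trans; apply; exact: leq_addl.
Qed.

Section GraphOf.
Variables (T : finType) (e : rel T).

Definition graph_of : graph :=
  existT (fun n => {ffun 'I_n * 'I_n -> bool}) #|T|
    [ffun p : 'I_#|T| * 'I_#|T| => e (enum_val p.1) (enum_val p.2)].

Lemma adj_graph_of x y : adj graph_of x y = e (enum_val x) (enum_val y).
Proof. by rewrite /adj ffunE. Qed.

Lemma calG_graph_of :
  0 < #|T| -> symmetric e -> irreflexive e -> (forall x y, connect e x y) ->
  calG graph_of.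
Proof.
move=> T_gt0 e_sym e_irr e_conn; split=> //; split.
  by move=> x y; rewrite !adj_graph_of e_sym e_irr.
move=> x y; rewrite -[x]enum_valK -[y]enum_valK.
by apply: homo_connect (e_conn _ _) => u v; rewrite adj_graph_of !enum_rankK.
Qed.

Lemma mem_closed_nbhdC_graph_of (D : {set 'I_#|T|}) v :
  (enum_rank v \in ~: closed_nbhd graph_of D) =
  [forall x in D, ~~ ((enum_val x == v) || e (enum_val x) v)].
Proof.
rewrite in_setC inE negb_exists; apply: eq_forallb => x.
by rewrite negb_and adj_graph_of enum_rankK -(can2_eq enum_valK enum_rankK) implybE.
Qed.

End GraphOf.

Arguments graph_of {T} e.
Arguments calG_graph_of {T e}.

Section Crowns.
Variables (k m : nat).

(* [None] is the hub and [Some (false, i)], [Some (true, i)] are the crown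
   vertices a_i, b_i, with a_i ~ b_j iff i != j; the hub is attached to a_0. *)
Definition crown_adj (u v : option (bool * 'I_k.+1)) : bool :=
  match u, v with
  | Some (s, i), Some (s', j) => (s != s') && (i != j)
  | None, Some (s, i) | Some (s, i), None => ~~ s && (i == ord0)
  | None, None => false
  end.

Definition crowns_adj (x y : 'I_m * option (bool * 'I_k.+1)) : bool :=
  if x.1 == y.1 then crown_adj x.2 y.2 else (x.2 == None) && (y.2 == None).

Definition crowns : graph := graph_of crowns_adj.

Lemma order_crowns : Defs.order crowns = m * (2 * k + 3).
Proof.
rewrite /Defs.order /= card_prod card_option card_prod card_bool !card_ord; lia.
Qed.

Lemma crown_adj_sym : symmetric crown_adj.
Proof. by case=> [[s i]|] [[s' j]|] //=; rewrite eq_sym (eq_sym i). Qed.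

Lemma crowns_adj_sym : symmetric crowns_adj.
Proof. by move=> x y; rewrite /crowns_adj eq_sym crown_adj_sym andbC. Qed.

Lemma crowns_adj_irr : irreflexive crowns_adj.
Proof. by case=> q [[s i]|]; rewrite /crowns_adj /= !eqxx. Qed.

Section Connected.
Hypothesis k_gt1 : 1 < k.

Lemma crown_connect_hub u : connect crown_adj u None.
Proof.
pose one : 'I_k.+1 := @Ordinal k.+1 1 (ltnW k_gt1).
pose two : 'I_k.+1 := @Ordinal k.+1 2 k_gt1.
have one_neq i : (one != i) = (val i != 1) by rewrite eq_sym.
have two_neq i : (two != i) = (val i != 2) by rewrite eq_sym.
have a0_hub : connect crown_adj (Some (false, ord0)) None by apply: connect1.
have b_hub j : j != ord0 -> connect crown_adj (Some (true, j)) None.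
  by move=> j0; apply: connect_trans a0_hub; apply: connect1; rewrite /= j0.
have a_hub i : i != ord0 -> connect crown_adj (Some (false, i)) None.
  (* k >= 2 provides an index j outside {0, i} *)
  move=> i0; pose j := if val i == 1 then two else one.
  have j0 : j != ord0 by rewrite /j; case: ifP; rewrite ?one_neq ?two_neq.
  apply: connect_trans (b_hub j j0); apply: connect1; rewrite /= /j.
  by case: ifP => [/eqP i1|/negbT i1]; rewrite eq_sym ?two_neq ?one_neq ?i1.
case: u => [[[] i]|]; last exact: connect0.
  have [->|i0] := eqVneq i ord0; last exact: b_hub.
  apply: connect_trans (a_hub one _); last by rewrite one_neq.
  exact: connect1.
by have [->|i0] := eqVneq i ord0; [exact: a0_hub | exact: a_hub].
Qed.

Lemma crowns_connect x y : connect crowns_adj x y.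
Proof.
have to_hub (z : 'I_m * _) : connect crowns_adj z (z.1, None).
  case: z => q u; apply: (@homo_connect _ _ _ _ (pair q) _ _ _ (crown_connect_hub u)) => v w.
  by rewrite /crowns_adj eqxx.
apply: connect_trans (to_hub x) _.
rewrite (sym_connect_sym crowns_adj_sym); apply: connect_trans (to_hub y) _.
have [->|neq] := eqVneq y.1 x.1; first exact: connect0.
by apply: connect1; rewrite /crowns_adj /= (negbTE neq).
Qed.

Lemma calG_crowns : 0 < m -> calG crowns.
Proof.
move=> m_gt0; apply: calG_graph_of crowns_adj_sym crowns_adj_irr crowns_connect.
by move: order_crowns => /= ->; rewrite muln_gt0 m_gt0 addn3.
Qed.

End Connected.

(* The star of copy [q] centred at [Some (s, i)], whose leaves are the
   [Some (~~ s, j)] with [j != i]. *)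
Definition star_vertex (q : 'I_m) (s : bool) (i : 'I_k.+1)
    (v : 'I_m * option (bool * 'I_k.+1)) : bool :=
  (v.1 == q) && if v.2 is Some (s', j) then (s' == s) == (j == i) else false.

Definition twin (u : option (bool * 'I_k.+1)) : bool * 'I_k.+1 :=
  if u is Some (s, i) then (~~ s, i) else (true, ord0).

Lemma star_vertex_far d q s i v :
  star_vertex q s i v -> (d.1 != q) || ((s, i) == twin d.2) ->
  ~~ ((d == v) || crowns_adj d v).
Proof.
case: d v => qd u [qv [[s' j]|]]; rewrite /star_vertex ?andbF //= => /andP[/eqP-> sj].
rewrite /crowns_adj /=; have [->|qdq] := eqVneq qd q; last first.
  by rewrite xpair_eqE (negbTE qdq) andbF.
case: u sj => [[s0 i0]|] /= sj /eqP[es ei]; subst s i; rewrite xpair_eqE eqxx /=.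
  move: sj; rewrite (inj_eq (@Some_inj _)) xpair_eqE.
  by apply/implyP; rewrite (eq_sym i0); case: (j == i0); case: s0; case: s'.
by case: s' sj => //= /esym/eqP->.
Qed.

Lemma not_isolating_crowns (D : {set 'I_(Defs.order crowns)}) q s i :
  (forall x v, x \in D -> star_vertex q s i v ->
     ~~ ((enum_val x == v) || crowns_adj (enum_val x) v)) ->
  ~~ isolating crowns [:: star k] D.
Proof.
move=> far; rewrite /isolating /= andbT negbK.
have star_centre : star_vertex q s i (q, Some (s, i)) by rewrite /star_vertex /= !eqxx.
have star_leaf t : star_vertex q s i (q, Some (~~ s, lift i t)).
  rewrite /star_vertex /= eqxx (eq_sym (lift i t)) (negbTE (neq_lift i t)); by case: (s).
apply: (@contains_star_copy crowns _ k (enum_rank (q, Some (s, i)))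
                         (fun t => enum_rank (q, Some (~~ s, lift i t)))).
- by move=> t t' /enum_rank_inj [] bump_eq; apply: (@lift_inj _ i); apply: val_inj.
- by move=> t; apply/eqP => /enum_rank_inj[]; case: (s).
- by move=> t; rewrite adj_graph_of !enum_rankK /crowns_adj /= eqxx neq_lift; case: (s).
- by move=> t; rewrite adj_graph_of !enum_rankK crowns_adj_sym /crowns_adj /= eqxx neq_lift; case: (s).
- by rewrite mem_closed_nbhdC_graph_of; apply/forall_inP => x /far; apply.
by move=> t; rewrite mem_closed_nbhdC_graph_of; apply/forall_inP => x /far; apply.
Qed.

Lemma isolating_crowns_block_gt1 (D : {set 'I_(Defs.order crowns)}) q :
  isolating crowns [:: star k] D -> 1 < #|[set x in D | (enum_val x).1 == q]|.
Proof.
set B := [set x in D | _]; rewrite ltnNge => iso; apply/negP => B_le1.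
pose si := if [pick x in B] is Some y then twin (enum_val y).2 else (true, ord0).
move: iso; apply/negP; apply: (not_isolating_crowns D q si.1 si.2) => x v xD qv.
apply: star_vertex_far qv _; rewrite -surjective_pairing.
case: eqVneq => //= xq.
have xB : x \in B by rewrite inE xD; apply/eqP.
rewrite /si; case: pickP => [y yB|/(_ x)]; last by rewrite xB.
by rewrite (card_le1_eqP B_le1 x y xB yB).
Qed.

Lemma isolating_crowns_card_ge (D : {set 'I_(Defs.order crowns)}) :
  isolating crowns [:: star k] D -> 2 * m <= #|D|.
Proof.
move=> iso; rewrite -sum1_card (partition_big (fun x => (enum_val x).1) predT) //.
rewrite mulnC -{1}(card_ord m) -sum_nat_const; apply: leq_sum => q _.
apply: leq_trans (isolating_crowns_block_gt1 D q iso) _.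
by rewrite -sum1_card; apply: eq_leq; apply: eq_bigl => x; rewrite inE.
Qed.

End Crowns.

Lemma calG_gt_crowns k m (c : rat) :
  1 < k -> 0 < m -> (c < 2%:R / (2 * k + 3)%:R)%R ->
  calG_gt [:: star k] c (crowns k m).
Proof.
move=> k_gt1 m_gt0 c_lt; apply: calG_gt_of_lt; first exact: calG_crowns.
have L_gt0 : (0 < (2 * k + 3)%:R :> rat)%R by rewrite ltr0n addn3.
have cL_lt2 : (c * (2 * k + 3)%:R < 2)%R by rewrite -ltr_pdivlMr.
apply: (@lt_le_trans _ _ ((2 * m)%:R)%R).
  by rewrite order_crowns natrM mulrCA mulrC natrM ltr_pM2r ?ltr0n.
rewrite ler_nat; apply: leq_iota => [|D]; last exact: isolating_crowns_card_ge.
rewrite order_crowns; nia.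
Qed.

Theorem proposition1 (k : nat) (c : rat) :
  (2 <= k)%N -> (0 < c)%R ->
  finite_family (calG_gt [:: star k] c) ->
  ~ finite_family (calG_star [:: star k] c) ->
  (2%:R / (2 * k + 3)%:R <= c)%R.
Proof.
(* only the finiteness of G[K_{1,k}, c] is needed *)
move=> k_gt1 _ /finite_family_order_bounded[N ordN] _.
rewrite leNgt; apply/negP => c_lt.
have := ordN _ (@calG_gt_crowns k N.+1 c k_gt1 (ltn0Sn N) c_lt).
rewrite order_crowns; nia.
Qed.
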